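(* Fix $\theta\in\mathbb{R}$ and a value $r\in\{0,1\}$ of the encryption randomness, and let $\mathcal{E}(\rho)=\mathcal{H}^\theta_r\rho(\mathcal{H}^\theta_r)^\dagger$ be the superoperator applied by $\Xi$ to the message qubit. For $t\in[0,1]$, the scheme $\Xi$ is $(t,\tfrac{1}{2}(2^{1-t}-1))$-indistinguishable on classical message states: for every density operator $\rho=\gamma_0\lvert 0\rangle\langle 0\rvert+\gamma_1\lvert 1\rangle\langle 1\rvert$ with $H_\infty(\rho)\ge t$, $$\Big\lVert \mathcal{E}(\rho)-\tfrac{1}{2}\mathbb{I}\Big\rVert_{tr}\le \tfrac{1}{2}(2^{1-t}-1).$$
   Context: For $\theta\in\mathbb{R}$ and $u\in\{0,1\}$, $\mathcal{H}^\theta_u=\frac{1}{\sqrt{2}}\begin{bmatrix}1 & 1\\ (-1)^u e^{i\theta} & (-1)^{u+1}e^{i\theta}\end{bmatrix}$. The scheme $\Xi$ encrypts a classical message bit $b$ under secret bit $s$ and angle $\theta$ by sampling a uniformly random bit $r$ and outputting $(\mathcal{H}^\theta_r\lvert s\rangle,\mathcal{H}^\theta_r\lvert b\rangle)$; the message qubit is thus transformed by $\mathcal{H}^\theta_r$. $H_\infty(\rho)=-\log_2\max\{\gamma_0,\gamma_1\}$ is the min-entropy, $\lVert X\rVert_{tr}=\frac{1}{2}\mathrm{Tr}\sqrt{X^\dagger X}$ is the trace distance norm, and $\mathbb{I}$ is the $2\times 2$ identity. (An encryption superoperator $\mathcal{E}$ is $(t,\epsilon)$-indistinguishable if $\lVert\mathcal{E}(\rho)-\frac{1}{d}\mathbb{I}\rVert_{tr}\le\epsilon$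 for all $\rho$ with $H_\infty(\rho)\ge t$, where $d$ is the message-space dimension, here $d=2$.) *)

From HB Require Import structures.
From mathcomp Require Import all_boot all_order all_algebra.
From mathcomp Require Import complex.
From mathcomp Require Import all_classical all_reals all_analysis.
From Stdlib Require Import ClassicalEpsilon.
Set Implicit Arguments. Unset Strict Implicit. Unset Printing Implicit Defensive.
Import Order.TTheory GRing.Theory Num.Theory.
Local Open Scope ring_scope.
Local Open Scope complex_scope.

Definition adjmx (R : realType) (m n : nat) (A : 'M[R[i]]_(m, n)) : 'M[R[i]]_(n, m) :=
  (map_mx Num.conj A)^T.

Definition expi (R : realType) (theta : R) : R[i] := Complex (cos theta) (sin theta).

(* H^theta_u = 1/sqrt 2 [[1, 1], [(-1)^u e^{i theta}, (-1)^(u+1) e^{i theta}]] *)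
Definition Hmat (R : realType) (theta : R) (u : bool) : 'M[R[i]]_2 :=
  (Num.sqrt (2 : R))^-1%:C *:
  \matrix_(j < 2, k < 2)
     (if j == 0 :> nat then 1
      else (-1) ^+ (u + k)%N * expi theta).

Definition psd (R : realType) (S : 'M[R[i]]_2) : Prop :=
  forall v : 'cV[R[i]]_2, 0 <= (adjmx v *m S *m v) 0 0.

Definition sqrt_AdagA (R : realType) (X : 'M[R[i]]_2) : 'M[R[i]]_2 :=
  epsilon (inhabits 0) (fun S => psd S /\ S *m S = adjmx X *m X).

Definition trnorm (R : realType) (X : 'M[R[i]]_2) : R :=
  (1 / 2) * complex.Re (\tr (sqrt_AdagA X)).

Definition classical_state (R : realType) (g0 g1 : R) : 'M[R[i]]_2 :=
  \matrix_(j < 2, k < 2)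
     (if j == k then (if j == 0 :> nat then g0%:C else g1%:C) else 0).

Definition is_density_diag (R : realType) (g0 g1 : R) : Prop :=
  0 <= g0 /\ 0 <= g1 /\ g0 + g1 = 1.

Definition min_entropy (R : realType) (g0 g1 : R) : R :=
  - (ln (Num.max g0 g1) / ln 2).

Definition Enc (R : realType) (theta : R) (r : bool) (rho : 'M[R[i]]_2) :=
  Hmat theta r *m rho *m adjmx (Hmat theta r).

From HB Require Import structures.
From mathcomp Require Import all_boot all_order all_algebra.
From mathcomp Require Import complex.
From mathcomp Require Import all_classical all_reals all_analysis.
From mathcomp Require Import ring lra.
From Stdlib Require Import ClassicalEpsilon.
Set Implicit Arguments. Unset Strict Implicit. Unset Printing Implicit Defensive.
Import Order.TTheory GRing.Theory Num.Theory.
Local Open Scope ring_scope.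
Local Open Scope complex_scope.

(* For a classical state (g0 + g1 = 1), E(rho) - I/2 has zero diagonal and
   off-diagonal entries a e^{-i theta}, a e^{i theta} with a = (-1)^r (g0 - g1)/2,
   so X^dagger X = a^2 I.  A positive semidefinite square root S of a^2 I has
   diagonal entries at most |a|, since (S S)_jj = S_jj^2 + |S_01|^2; hence
   ||X||_tr <= |a| = (2 max(g0, g1) - 1)/2, and the min-entropy hypothesis is
   exactly max(g0, g1) <= 2^-t. *)

Lemma ord2_cases (i : 'I_2) : i = 0 \/ i = 1.
Proof. by case: i => [[|[|//]] ?]; [left | right]; apply: val_inj. Qed.

Lemma mx2_eq (T : Type) (A B : 'M[T]_2) :
  A 0 0 = B 0 0 -> A 0 1 = B 0 1 -> A 1 0 = B 1 0 -> A 1 1 = B 1 1 -> A = B.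
Proof.
move=> e00 e01 e10 e11; apply/matrixP => i j.
by case: (ord2_cases i) => ->; case: (ord2_cases j) => ->.
Qed.

Lemma mulmx2E (T : pzSemiRingType) m n (A : 'M[T]_(m, 2)) (B : 'M[T]_(2, n)) i j :
  (A *m B) i j = A i 0 * B 0 j + A i 1 * B 1 j.
Proof.
rewrite mxE !big_ord_recl big_ord0 addr0.
by congr (_ * _ + _ * _); congr (_ _ _); apply: val_inj.
Qed.

Section TwoByTwoComplex.
Variable R : realType.
Implicit Types (S X : 'M[R[i]]_2) (c : R).

Lemma psd_formE S (v : 'cV[R[i]]_2) :
  (adjmx v *m S *m v) 0 0 =
  (v 0 0)^* * S 0 0 * v 0 0 + (v 0 0)^* * S 0 1 * v 1 0
  + (v 1 0)^* * S 1 0 * v 0 0 + (v 1 0)^* * S 1 1 * v 1 0.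
Proof. by rewrite !mulmx2E /adjmx !mxE; ring. Qed.

Lemma psd_hermitian S :
  psd S -> [/\ 0 <= S 0 0, 0 <= S 1 1 & S 1 0 = (S 0 1)^*].
Proof.
move=> HS.
have form a b : 0 <= a^* * S 0 0 * a + a^* * S 0 1 * b
                     + b^* * S 1 0 * a + b^* * S 1 1 * b.
  by have := HS (\col_k (if k == 0 then a else b)); rewrite psd_formE !mxE.
move: (form 1 0) (form 0 1) (form 1 1) (form 1 'i).
case: (S 0 0) (S 0 1) (S 1 0) (S 1 1) => [a0 b0] [a1 b1] [a2 b2] [a3 b3].
rewrite !lecE /= => /andP[/eqP h1 h2] /andP[/eqP h3 h4] /andP[/eqP h5 _] /andP[/eqP h7 _].
by split; [apply/andP; split; [apply/eqP|] .. | congr Complex]; lra.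
Qed.

Lemma psd_scalar (z : R[i]) : 0 <= z -> psd z%:M.
Proof.
move=> z_ge0 v; rewrite psd_formE !mxE /= !mulr1n !mulr0n !mulr0 !mul0r !addr0.
rewrite -!mulrA [_ * v 0 0]mulrC [_ * v 1 0]mulrC !mulrA -mulrDl mulrC.
by rewrite mulr_ge0 // addr_ge0 // [_ * _]mulrC mul_conjC_ge0.
Qed.

Lemma psd_sqr_scalar_diag_le S c : 0 <= c -> psd S -> S *m S = (c%:C ^+ 2)%:M ->
  S 0 0 <= c%:C /\ S 1 1 <= c%:C.
Proof.
move=> c_ge0 HS SS; have [S00_ge0 S11_ge0 S10E] := psd_hermitian HS.
have c_nneg : c%:C \in Num.nneg by rewrite nnegrE lecR.
have SSE i : (S *m S) i i = (c%:C ^+ 2) by rewrite SS mxE eqxx.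
move: (SSE 0) (SSE 1); rewrite !mulmx2E S10E => SS00 SS11.
split; rewrite -ler_sqr ?nnegrE //; [rewrite -SS00 | rewrite -SS11 addrC].
- by rewrite lerDl mul_conjC_ge0.
- by rewrite lerDl mulrC mul_conjC_ge0.
Qed.

Lemma trnorm_le_of_scalar_adj_mul X c :
  0 <= c -> adjmx X *m X = (c%:C ^+ 2)%:M -> trnorm X <= c.
Proof.
move=> c_ge0 XX.
have sqrt_ex : exists S, psd S /\ S *m S = adjmx X *m X.
  exists c%:C%:M; split; first by apply: psd_scalar; rewrite lecR.
  by rewrite XX -scalar_mxM expr2.
(* Without a witness, sqrt_AdagA X would be an unspecified matrix. *)
have [HS SS] := epsilon_spec (inhabits 0) _ sqrt_ex.
rewrite /trnorm /sqrt_AdagA; set S := epsilon _ _ in HS SS *.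
have [S00_le S11_le] := psd_sqr_scalar_diag_le c_ge0 HS (etrans SS XX).
have : \tr S <= c%:C + c%:C.
  rewrite /mxtrace !big_ord_recl big_ord0 addr0 lerD //.
  by have -> : lift ord0 ord0 = 1 :> 'I_2 by apply/val_inj.
by rewrite -rmorphD lecE /= => /andP[_]; lra.
Qed.

End TwoByTwoComplex.

Section Scheme.
Variable R : realType.

Definition antidiag_mx (u v : R[i]) : 'M[R[i]]_2 :=
  \matrix_(j, k) (if j == k then 0 else if j == 0 then u else v).

Lemma adjmx_antidiag_mul (u v : R[i]) c : `|u| = c%:C -> `|v| = c%:C ->
  adjmx (antidiag_mx u v) *m antidiag_mx u v = (c%:C ^+ 2)%:M.
Proof.
move=> nu nv; apply: mx2_eq; rewrite !mulmx2E /adjmx !mxE /= ?mulr1n ?mulr0n.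
all: rewrite ?rmorph0 ?mul0r ?mulr0 ?add0r ?addr0 //.
- by rewrite -nv normCK mulrC.
- by rewrite -nu normCK mulrC.
Qed.

Lemma normc_real (a : R) : `|a%:C| = `|a|%:C.
Proof. by rewrite normc_def /= expr0n addr0 sqrtr_sqr. Qed.

Lemma norm_expi (theta : R) : `|expi theta| = 1.
Proof. by rewrite normc_def /= cos2Dsin2 sqrtr1. Qed.

Lemma Enc_classical_sub_half (theta : R) (r : bool) (g0 g1 : R) : g0 + g1 = 1 ->
  let a := (-1) ^+ r * (g0 - g1) / 2 in
  Enc theta r (classical_state g0 g1) - (1 / 2 : R)%:C%:M =
  antidiag_mx (a%:C * (expi theta)^*) (a%:C * expi theta).
Proof.
move=> g_sum a; rewrite {}/a.
have k2 : (2 : R)^-1 = (Num.sqrt 2)^-1 * (Num.sqrt 2)^-1.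
  by rewrite -invfM -expr2 sqr_sqrtr.
have cs := cos2Dsin2 theta.
apply: mx2_eq; rewrite /Enc /adjmx /Hmat /classical_state /expi !(mulmx2E, mxE) /=.
all: case: r; rewrite /= ?expr0 ?expr1 ?expr2.
all: apply/eqP; rewrite eq_complex /=; apply/andP; split; apply/eqP.
(* Off-diagonal entries are ring identities once 1/2 is written (1/sqrt 2)^2;
   the diagonal ones also use g0 + g1 = 1 and cos^2 + sin^2 = 1. *)
all: rewrite ?k2; set k := (Num.sqrt 2)^-1 in k2 *.
all: try ring.
all: rewrite -k2; nra.
Qed.

Lemma le_powR2_of_le_neg_log2 (p t : R) : 0 < p -> t <= - (ln p / ln 2) ->
  p <= 2 `^ (- t).
Proof.
move=> p_gt0 t_le; have ln2_gt0 : 0 < ln (2 : R) by rewrite ln_gt0 // ltr1n.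
rewrite -ler_ln ?posrE ?powR_gt0 // ln_powR.
by move: t_le; rewrite lerNr ler_pdivrMr.
Qed.

Lemma normr_sub_max (x y : R) : x + y = 1 -> `|x - y| = 2 * Num.max x y - 1.
Proof.
by move=> xy1; rewrite maxEle; case: leP => xy; [rewrite distrC|]; rewrite ger0_norm; lra.
Qed.

End Scheme.

Theorem theorem3 (R : realType) (theta : R) (r : bool) (t : R)
  (ht : 0 <= t <= 1) (g0 g1 : R) :
  is_density_diag g0 g1 ->
  t <= min_entropy g0 g1 ->
  trnorm (Enc theta r (classical_state g0 g1) - (1 / 2 : R)%:C%:M)
    <= (1 / 2) * (2 `^ (1 - t) - 1).
Proof.
move=> [g0_ge0 [g1_ge0 g_sum]] t_le_Hmin.
set a := (-1) ^+ r * (g0 - g1) / 2.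
have norm_a : `|a| = (2 * Num.max g0 g1 - 1) / 2.
  by rewrite /a normrM normrM normr_sign mul1r normr_sub_max // ger0_norm.
have max_gt0 : 0 < Num.max g0 g1 by rewrite lt_max; case: ltP => //= g0_le0; lra.
have max_le := le_powR2_of_le_neg_log2 max_gt0 t_le_Hmin.
have pow_1_t : 2 `^ (1 - t) = 2 * 2 `^ (- t) :> R.
  by rewrite powRD ?pnatr_eq0 ?implybT // powRr1.
apply: le_trans (trnorm_le_of_scalar_adj_mul (normr_ge0 a) _) _.
  rewrite Enc_classical_sub_half //; apply: adjmx_antidiag_mul;
  by rewrite normrM ?normcJ norm_expi normc_real mulr1.
rewrite norm_a pow_1_t; lra.
Qed.
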